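(* Let $p$ be an odd prime, $x\in\mathbb Z_p$ and $x\not\equiv0\pmod p$. Then $$\sum_{k=0}^{\frac{p-1}2}\frac{\binom{2k}k^2}{16^k}\Big(x^k-\Big(\frac xp\Big)x^{-k}\Big)\equiv0\pmod p.$$
   Context: $\mathbb Z_p$ denotes the set of rational numbers whose denominator (in lowest terms) is prime to $p$; congruences are in this ring. For $a\in\mathbb Z_p$, $\big(\frac ap\big)$ is the Legendre symbol of the residue of $a$ modulo $p$. *)

From mathcomp Require Import all_boot all_order all_algebra.
Set Implicit Arguments. Unset Strict Implicit. Unset Printing Implicit Defensive.
Import Order.TTheory GRing.Theory Num.Theory.
Local Open Scope ring_scope.

(* r belongs to Z_p = { rationals whose lowest-terms denominator is prime to p } *)
Definition pint (p : nat) (r : rat) : bool := coprime `|denq r|%N p.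

Definition congrp (p : nat) (a b : rat) : bool :=
  [&& pint p a, pint p b & pint p ((a - b) / p%:R)].

Definition legendre (p : nat) (a : rat) : rat :=
  if congrp p a 0 then 0
  else if [exists y : 'I_p, congrp p ((nat_of_ord y)%:R ^+ 2) a] then 1
  else -1.

From mathcomp Require Import all_boot all_order all_algebra finfield.
From mathcomp Require Import ring zify.
Set Implicit Arguments. Unset Strict Implicit. Unset Printing Implicit Defensive.
Import Order.TTheory GRing.Theory Num.Theory.
Local Open Scope ring_scope.

(* Reduce modulo p: write p = 2n + 1 and let a be the residue of x in F_p.
   Since -1/2 = n in F_p, binom(2k, k) = (-4)^k binom(n, k) there, so the sum
   becomes the sum of binom(n, k)^2 (a^k - (a/p) a^-k).  By Euler's criterion
   (a/p) = a^n, and the substitution k -> n - k maps the first half of this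
   sum onto the second one. *)

Lemma odd_pred_half (m : nat) : odd m -> m = ((m.-1)./2).*2.+1.
Proof.
by case: m => //= m /negbTE m_even; rewrite -[m in LHS]odd_double_half m_even.
Qed.

Lemma mul_central_binS (k : nat) :
  (k.+1 * 'C(k.*2.+2, k.+1) = 2 * k.*2.+1 * 'C(k.*2, k))%N.
Proof.
rewrite -mul_bin_diag -mulnA.
have /= -> := mul_bin_down k.*2.+1 k.
have -> : (k.*2.+1 - k = k.+1)%N by lia.
by rewrite mulnA mul2n doubleS.
Qed.

Lemma sum_binom_sqr_palindrome (F : fieldType) (n : nat) (a : F) : a != 0 ->
  \sum_(0 <= k < n.+1) 'C(n, k)%:R ^+ 2 * a ^+ k
    = a ^+ n * \sum_(0 <= k < n.+1) 'C(n, k)%:R ^+ 2 * a ^- k.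
Proof.
move=> a_neq0; rewrite mulr_sumr big_nat_rev; apply: eq_big_nat => k /andP [_].
rewrite ltnS => le_kn.
rewrite add0n subSS bin_sub // mulrCA; congr (_ * _).
by rewrite -[in a ^+ n](subnK le_kn) exprD mulfK // expf_neq0.
Qed.

Section ReductionModp.
Variable p : nat.
Hypothesis p_prime : prime p.

(* On [pint p], [ratr : rat -> 'F_p] is the reduction modulo [p]. *)
Definition reduces (r : rat) (a : 'F_p) := pint p r /\ ratr r = a.

Lemma intr_Fp_neq0 (d : int) : coprime `|d| p -> d%:~R != 0 :> 'F_p.
Proof.
rewrite -(dvdz_pcharf (pchar_Fp p_prime)) dvdzE /=.
by rewrite -prime_coprime // coprime_sym.
Qed.

Lemma reduces_int (z : int) : reduces z%:~R z%:~R.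
Proof. by split; [rewrite /pint denq_int coprime1n | exact: ratr_int]. Qed.

Lemma reduces_nat (m : nat) : reduces m%:R m%:R.
Proof. exact: reduces_int m. Qed.

Lemma reduces_frac (m d : int) :
  coprime `|d| p -> reduces (m%:~R / d%:~R) (m%:~R / d%:~R).
Proof.
(* [divqP] writes [m] and [d] as [k * numq r] and [k * denq r]. *)
case: divqP => [_ _ | k r _].
  by rewrite mulr0z invr0 mulr0; exact: reduces_int 0.
move=> /[!abszM] /[!coprimeMl] /andP [k_cop den_cop]; split => //.
by rewrite !intrM -mulf_div divff ?intr_Fp_neq0 // mul1r.
Qed.

Lemma reducesP r a : reduces r a ->
  exists m d : int, [/\ coprime `|d| p, r = m%:~R / d%:~R & a = m%:~R / d%:~R].
Proof.
move=> [r_int <-]; exists (numq r), (denq r).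
by split; rewrite ?divq_num_den.
Qed.

Lemma coprime_int_neq0 (d : int) : coprime `|d| p -> d != 0.
Proof. by move/intr_Fp_neq0; apply: contraNneq => ->. Qed.

Lemma reducesD r s a b : reduces r a -> reduces s b -> reduces (r + s) (a + b).
Proof.
move=> /reducesP [m1 [d1 [c1 -> ->]]] /reducesP [m2 [d2 [c2 -> ->]]].
have c12 : coprime `|d1 * d2| p by rewrite abszM coprimeMl c1.
rewrite !addf_div ?intr_Fp_neq0 ?intr_eq0 ?coprime_int_neq0 //.
by rewrite -!intrM -!intrD; exact: reduces_frac.
Qed.

Lemma reducesM r s a b : reduces r a -> reduces s b -> reduces (r * s) (a * b).
Proof.
move=> /reducesP [m1 [d1 [c1 -> ->]]] /reducesP [m2 [d2 [c2 -> ->]]].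
have c12 : coprime `|d1 * d2| p by rewrite abszM coprimeMl c1.
by rewrite !mulf_div -!intrM; exact: reduces_frac.
Qed.

Lemma reducesN r a : reduces r a -> reduces (- r) (- a).
Proof. by move/(reducesM (reduces_int (-1))); rewrite !mulrN1z !mulN1r. Qed.

Lemma reducesV r a : reduces r a -> a != 0 -> reduces r^-1 a^-1.
Proof.
move=> /reducesP [m [d [c -> ->]]].
rewrite mulf_eq0 negb_or => /andP [m_neq0 _].
rewrite !invf_div; apply: reduces_frac.
rewrite coprime_sym prime_coprime //; apply: contra m_neq0 => p_dvd_m.
by rewrite -(dvdz_pcharf (pchar_Fp p_prime)).
Qed.

Lemma reducesX r a k : reduces r a -> reduces (r ^+ k) (a ^+ k).
Proof.
move=> red_r; elim: k => [|k IHk]; first exact: reduces_nat 1.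
by rewrite !exprS; exact: reducesM.
Qed.

Lemma reduces_sum n (F : nat -> rat) (G : nat -> 'F_p) :
    (forall k, (k < n)%N -> reduces (F k) (G k)) ->
  reduces (\sum_(0 <= k < n) F k) (\sum_(0 <= k < n) G k).
Proof.
move=> red_FG; rewrite !big_nat.
apply: (big_ind2 reduces) => //; first exact: reduces_nat 0.
by move=> r a s b; exact: reducesD.
Qed.

Lemma congrpE a b :
  congrp p a b = [&& pint p a, pint p b & ratr a == ratr b :> 'F_p].
Proof.
rewrite /congrp; have [a_int|] //= := boolP (pint p a).
have [b_int|] //= := boolP (pint p b).
have [ab_int red_ab] :=
  reducesD (conj a_int erefl) (reducesN (conj b_int erefl)).
have p_neq0 : p%:R != 0 :> rat by rewrite pnatr_eq0 -lt0n prime_gt0.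
rewrite -subr_eq0 -red_ab; apply/idP/eqP => [c_int | ab_eq0].
  have [_] := reducesM (conj c_int erefl) (reduces_nat p).
  by rewrite divfK // pchar_Fp_0 // mulr0.
have [m [d [d_cop ab_eq red_m]]] := reducesP (conj ab_int erefl).
move: red_m; rewrite ab_eq0 => /esym/eqP.
rewrite mulf_eq0 invr_eq0 (negbTE (intr_Fp_neq0 d_cop)) orbF.
rewrite -(dvdz_pcharf (pchar_Fp p_prime)) => /dvdzP [q m_eq].
by rewrite ab_eq m_eq intrM mulrAC mulfK //; case: (reduces_frac q d_cop).
Qed.

Lemma reduces_legendre x : pint p x -> ~~ congrp p x 0 ->
  reduces (legendre p x)
    (if [exists y : 'I_p, (y : nat)%:R ^+ 2 == ratr x :> 'F_p] then 1 else -1).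
Proof.
move=> x_int x_nonzero; rewrite /legendre (negbTE x_nonzero).
have -> : [exists y : 'I_p, congrp p ((y : nat)%:R ^+ 2) x] =
          [exists y : 'I_p, (y : nat)%:R ^+ 2 == ratr x :> 'F_p].
  apply: eq_existsb => y; have [y2_int y2_red] := reducesX 2 (reduces_nat y).
  by rewrite congrpE y2_int x_int y2_red.
by case: ifP => _; [exact: reduces_nat 1 | exact: reducesN (reduces_nat 1)].
Qed.

Section HalfPrime.
Variable n : nat.
Hypothesis p_eq : p = n.*2.+1.

Lemma half_gt0 : (0 < n)%N.
Proof. by have := prime_gt1 p_prime; rewrite p_eq; lia. Qed.

Lemma natr_Fp_neq0 m : (0 < m < p)%N -> m%:R != 0 :> 'F_p.
Proof.
rewrite -(dvdn_pcharf (pchar_Fp p_prime)) => /andP [m_gt0 lt_mp].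
by apply/negP => /(dvdn_leq m_gt0); rewrite leqNgt lt_mp.
Qed.

Lemma Fp_fermat (a : 'F_p) : a != 0 -> a ^+ n.*2 = 1.
Proof.
move=> a_neq0; apply: (mulfI a_neq0); rewrite mulr1 -exprS -p_eq.
by have := expf_card a; rewrite card_Fp.
Qed.

Lemma central_binomial_Fp k : (k <= n)%N ->
  'C(k.*2, k)%:R = (-4) ^+ k * 'C(n, k)%:R :> 'F_p.
Proof.
elim: k => [|k IHk] lt_kn; first by rewrite !bin0 mul1r.
have k1_neq0 : k.+1%:R != 0 :> 'F_p by apply: natr_Fp_neq0; rewrite p_eq; lia.
have odd_eq : k.*2.+1%:R = - 2 * (n - k)%:R :> 'F_p.
  have p0 : n.*2.+1%:R = 0 :> 'F_p by rewrite -p_eq pchar_Fp_0.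
  rewrite natrB ?(ltnW lt_kn) // -[LHS]subr0 -p0.
  by rewrite -[k.*2.+1]addn1 -[n.*2.+1]addn1 -!muln2 !natrD !natrM; ring.
apply: (mulfI k1_neq0).
rewrite -[LHS]natrM doubleS mul_central_binS !natrM IHk ?(ltnW lt_kn) // odd_eq.
rewrite [RHS]mulrCA -natrM mul_bin_left natrM exprS; ring.
Qed.

Lemma natr_sqr_Fp_inj i j : (0 < i <= n)%N -> (0 < j <= n)%N ->
  i%:R ^+ 2 = j%:R ^+ 2 :> 'F_p -> i = j.
Proof.
move=> /andP [i_gt0 le_in] /andP [j_gt0 le_jn] /eqP; rewrite eqf_sqr.
have [lt_ip lt_jp] : (i < p)%N /\ (j < p)%N by rewrite p_eq; lia.
case/orP => /eqP ij_eq.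
  by have := val_Fp_nat p_prime i; rewrite ij_eq val_Fp_nat // !modn_small.
have : (i + j)%:R != 0 :> 'F_p by apply: natr_Fp_neq0; rewrite p_eq; lia.
by rewrite natrD ij_eq addNr eqxx.
Qed.

Lemma pow_half_eq1_square (a : 'F_p) :
  a ^+ n = 1 -> [exists y : 'I_p, (y : nat)%:R ^+ 2 == a].
Proof.
(* Otherwise [a] and the squares of [1, ..., n] are n + 1 roots of X^n - 1. *)
move=> an_eq1; apply: contraT => a_nonsq.
pose squares := [seq i%:R ^+ 2 : 'F_p | i <- iota 1 n].
have in_half i : i \in iota 1 n -> (0 < i <= n)%N by rewrite mem_iota; lia.
have lt_half_p i : (0 < i <= n)%N -> (0 < i < p)%N by rewrite p_eq; lia.
have := @max_poly_roots _ ('X^n - 1) (a :: squares).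
rewrite size_Xn_sub_1 ?half_gt0 //= size_map size_iota ltnn; apply.
- by rewrite -size_poly_eq0 size_Xn_sub_1 ?half_gt0.
- rewrite /= {1}/root !hornerE an_eq1 subrr eqxx /=.
  apply/allP => _ /mapP [i /in_half /lt_half_p lt_i ->].
  by rewrite /root !hornerE -exprM mul2n Fp_fermat ?subrr ?natr_Fp_neq0.
- rewrite /= map_inj_in_uniq ?iota_uniq ?andbT.
    apply/mapP => [[i /in_half /lt_half_p /andP [_ lt_ip] sqr_i]].
    move/negP: a_nonsq; apply; apply/existsP.
    by exists (Ordinal lt_ip); rewrite /= sqr_i.
  by move=> i j /in_half i_half /in_half j_half; apply: natr_sqr_Fp_inj.
Qed.

Lemma euler_criterion (a : 'F_p) : a != 0 ->
  a ^+ n = if [exists y : 'I_p, (y : nat)%:R ^+ 2 == a] then 1 else -1.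
Proof.
move=> a_neq0; case: ifPn => [/existsP [y /eqP y2_eq] | a_nonsq].
  move: a_neq0; rewrite -y2_eq sqrf_eq0 => y_neq0.
  by rewrite -exprM mul2n Fp_fermat.
have : (a ^+ n) ^+ 2 == 1 by rewrite -exprM muln2 Fp_fermat.
rewrite sqrf_eq1 => /orP [/eqP /pow_half_eq1_square a_sq | /eqP //].
by rewrite a_sq in a_nonsq.
Qed.

Lemma sixteen_Fp_neq0 : 16 != 0 :> 'F_p.
Proof.
have -> : 16 = 2 ^+ 4 :> 'F_p by rewrite -natrX.
by rewrite expf_neq0 // natr_Fp_neq0 // p_eq; have := half_gt0; lia.
Qed.

Lemma sum_central_binomial_Fp (a : 'F_p) : a != 0 ->
  \sum_(0 <= k < n.+1)
    ('C(k.*2, k)%:R ^+ 2 / 16 ^+ k) * (a ^+ k - a ^+ n * a ^- k) = 0.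
Proof.
move=> a_neq0.
rewrite (eq_big_nat _ _ (F2 := fun k =>
    'C(n, k)%:R ^+ 2 * a ^+ k - a ^+ n * ('C(n, k)%:R ^+ 2 * a ^- k))).
  by rewrite sumrB -mulr_sumr sum_binom_sqr_palindrome // subrr.
move=> k /andP [_]; rewrite ltnS => le_kn.
have sqr4 : (-4) ^+ 2 = 16 :> 'F_p by rewrite sqrrN -natrX.
rewrite central_binomial_Fp // exprMn -exprM mulnC exprM sqr4.
rewrite [16 ^+ k * _]mulrC mulfK ?expf_neq0 ?sixteen_Fp_neq0 //.
by rewrite mulrBr mulrCA.
Qed.

Lemma congrp_sum_central_binomial x : pint p x -> ~~ congrp p x 0 ->
  congrp p (\sum_(0 <= k < n.+1)
    ('C(k.*2, k)%:R ^+ 2 / 16 ^+ k) * (x ^+ k - legendre p x * x ^- k)) 0.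
Proof.
move=> x_int x_nonzero; set a : 'F_p := ratr x.
have [zero_int zero_red] := reduces_nat 0.
have a_neq0 : a != 0.
  by move: x_nonzero; rewrite congrpE x_int zero_int zero_red.
have red_x : reduces x a by [].
have red_legendre : reduces (legendre p x) (a ^+ n).
  by rewrite euler_criterion //; exact: reduces_legendre.
have [sum_int sum_red] : reduces
    (\sum_(0 <= k < n.+1)
      ('C(k.*2, k)%:R ^+ 2 / 16 ^+ k) * (x ^+ k - legendre p x * x ^- k))
    (\sum_(0 <= k < n.+1)
      ('C(k.*2, k)%:R ^+ 2 / 16 ^+ k) * (a ^+ k - a ^+ n * a ^- k)).
  apply: reduces_sum => k _; apply: reducesM.
    apply: reducesM; first exact/reducesX/reduces_nat.
    apply: reducesV; first exact/reducesX/reduces_nat.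
    by rewrite expf_neq0 ?sixteen_Fp_neq0.
  apply/reducesD/reducesN; first exact: reducesX.
  apply: reducesM => //; apply: reducesV; first exact: reducesX.
  by rewrite expf_neq0.
by rewrite congrpE sum_int zero_int sum_red zero_red sum_central_binomial_Fp.
Qed.

End HalfPrime.
End ReductionModp.

Theorem theorem2p7 (p : nat) (x : rat) :
  prime p -> odd p -> pint p x -> ~~ congrp p x 0 ->
  congrp p
    (\sum_(0 <= k < (p.-1)./2.+1)
       (('C(k.*2, k))%:R ^+ 2 / 16 ^+ k) * (x ^+ k - legendre p x * x ^- k))
    0.
Proof.
move=> p_prime p_odd.
exact: (congrp_sum_central_binomial p_prime (odd_pred_half p_odd)).
Qed.
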